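(* Let $(N,\mathcal{I})$ be a set system, $f:2^N\to\mathbb{R}_{\ge0}$ a normalized monotone submodular function with multilinear extension $F$, $\alpha\in(0,1]$, $\ell$ a positive integer, and fix $T\in\mathcal{I}$. Let $S_1,\dots,S_\ell$ be random sets in $\mathcal{I}$, let $x_0=0$ and $x_i=x_{i-1}+\frac1\ell\mathbf{1}_{S_i}$. For each $i$ define, for $A,B\subseteq N$, $g_i(A)=F(x_{i-1}+\frac1\ell\mathbf{1}_A)-F(x_{i-1})$ and $g_i(A\uplus B)=F(x_{i-1}+\frac1\ell(\mathbf{1}_A+\mathbf{1}_B))-F(x_{i-1})$. Suppose that for each $i$, conditioned on $S_1,\dots,S_{i-1}$, $\mathbb{E}[g_i(S_i)]\ge\alpha\,\mathbb{E}[g_i(S_i\uplus T)-g_i(S_i)]$. Then $x_\ell$ is a convex combination of indicator vectors of $\ell$ sets of $\mathcal{I}$, and $\mathbb{E}[F(x_\ell)]\ge\bigl(1-(1+\alpha/\ell)^{-\ell}\bigr)f(T)\ge(1-2/\ell)(1-e^{-\alpha})f(T)$; in particular, for $\ell\ge2/\varepsilon$, $\mathbb{E}[F(x_\ell)]\ge(1-\varepsilon)(1-e^{-\alpha})f(T)$.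
   Context: $f$ normalized: $f(\emptyset)=0$; monotone: $f(A)\le f(B)$ for $A\subseteq B$; submodular: $f(A)+f(B)\ge f(A\cup B)+f(A\cap B)$. The multilinear extension is $F(x)=\mathbb{E}[f(R)]$ for $x\in\mathbb{R}_{\ge0}^N$, where $R$ contains each $e$ independently with probability $\min\{x_e,1\}$; $\mathbf{1}_A$ is the indicator vector of $A$. *)

From Stdlib Require Import Reals.
From HB Require Import structures.
From mathcomp Require Import all_boot.

Set Implicit Arguments.
Unset Strict Implicit.
Unset Printing Implicit Defensive.

Local Open Scope R_scope.

Notation "\rsum_ ( i : T ) F" := (\big[Rplus/R0]_(i : T) F)
  (at level 41, F at level 41, i, T at level 50).
Notation "\rsum_ ( i < n ) F" := (\big[Rplus/R0]_(i < n) F)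
  (at level 41, F at level 41, i, n at level 50).
Notation "\rprod_ ( i : T ) F" := (\big[Rmult/R1]_(i : T) F)
  (at level 36, F at level 36, i, T at level 50).

Section Defs.
Variable N : finType.

Definition normalized (f : {set N} -> R) : Prop := f set0 = 0.
Definition nonneg_setfun (f : {set N} -> R) : Prop := forall A, 0 <= f A.
Definition monotone (f : {set N} -> R) : Prop :=
  forall A B : {set N}, A \subset B -> f A <= f B.
Definition submodular (f : {set N} -> R) : Prop :=
  forall A B : {set N}, f A + f B >= f (A :|: B) + f (A :&: B).

Definition indic (A : {set N}) : N -> R := fun e => if e \in A then 1 else 0.

(* multilinear extension: F(x) = E[f(R)], R contains e independently
   with probability min(x_e, 1) *)
Definition multilinear (f : {set N} -> R) (x : N -> R) : R :=
  \rsum_(A : {set N})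
    (f A * \rprod_(e : N)
       (if e \in A then Rmin (x e) 1 else 1 - Rmin (x e) 1)).

(* the random process is given by a (finite) probability distribution p
   on outcomes s = (S_1,...,S_l), encoded as s : {ffun 'I_l -> {set N}}
   (S_{j+1} = s j).  Expectation of X : *)
Definition expect (l : nat) (p : {ffun 'I_l -> {set N}} -> R)
  (X : {ffun 'I_l -> {set N}} -> R) : R :=
  \rsum_(s : {ffun 'I_l -> {set N}}) (p s * X s).

(* x_i = sum_{j < i} (1/l) 1_{S_{j+1}}, so x_0 = 0, x_i = x_{i-1} + 1/l 1_{S_i} *)
Definition xs (l : nat) (s : {ffun 'I_l -> {set N}}) (i : nat) : N -> R :=
  fun e => \big[Rplus/R0]_(j < l | (j < i)%N) (/ INR l * indic (s j) e).

End Defs.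

From Stdlib Require Import Reals Lra Psatz.
From HB Require Import structures.
From mathcomp Require Import all_boot.
Local Open Scope R_scope.
Set Implicit Arguments.
Unset Strict Implicit.

(* Write F for the multilinear extension and a_i = E[F(x_i)].
   1. On the unit cube F is the multilinear polynomial
      mext f q = sum_A f(A) prod_e (q_e or 1 - q_e); it is affine in each
      coordinate, monotone when f is, and concave along nonnegative
      directions when f is submodular.  Hence for y in the cube and
      0 <= eps <= 1, F(y + eps 1_T) >= (1 - eps) F(y) + eps f(T)
      (lemma [multilinear_step]).
   2. Since x_i = x_{i-1} + 1_{S_i}/l, the oracle hypothesis and step 1 give
      a_i - a_{i-1} >= (alpha/l) (f(T) - a_i); by the law of total
      expectation the conditional hypotheses imply the unconditional one.
   3. Unrolling this recurrence from a_0 = F(0) = f(empty) = 0 yields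
      f(T) - a_l <= f(T) (1 + alpha/l)^(-l).
   4. An elementary estimate, (1 + t)^(-1) <= e^(-t) / (1 - t^2) together with
      Bernoulli's inequality, bounds the loss against 1 - e^(-alpha).
   The convex-combination claim is immediate: x_l = sum_j (1/l) 1_{S_j}. *)

HB.instance Definition _ := Monoid.isComLaw.Build R R0 Rplus
  (fun a b c => esym (Rplus_assoc a b c)) Rplus_comm Rplus_0_l.
HB.instance Definition _ := Monoid.isComLaw.Build R R1 Rmult
  (fun a b c => esym (Rmult_assoc a b c)) Rmult_comm Rmult_1_l.
HB.instance Definition _ := Monoid.isMulLaw.Build R R0 Rmult Rmult_0_l Rmult_0_r.
HB.instance Definition _ := Monoid.isAddLaw.Build R Rmult Rplus
  Rmult_plus_distr_r Rmult_plus_distr_l.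

Section RealSums.
Variable I : finType.
Implicit Types F G : I -> R.

Lemma rsum_opp F : \rsum_(i : I) (- F i) = - \rsum_(i : I) F i.
Proof. by rewrite (big_morph Ropp Ropp_plus_distr Ropp_0). Qed.

Lemma rsum_le F G : (forall i, F i <= G i) -> \rsum_(i : I) F i <= \rsum_(i : I) G i.
Proof.
move=> FG; apply: (big_ind2 (fun x y => x <= y)); [lra | move=> *; lra |].
by move=> i _; apply: FG.
Qed.

Lemma rsum_ge0 F : (forall i, 0 <= F i) -> 0 <= \rsum_(i : I) F i.
Proof.
move=> F0; apply: (big_ind (fun x => 0 <= x)); [lra | move=> *; lra |].
by move=> i _; apply: F0.
Qed.

End RealSums.

Lemma rsum_const (n : nat) (c : R) : \rsum_(j < n) c = INR n * c.
Proof.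
elim: n => [|n IH]; first by rewrite big_ord0 /=; ring.
by rewrite S_INR big_ord_recr IH /=; ring.
Qed.

Section MultilinearPolynomial.
Variable N : finType.
Implicit Types (q : N -> R) (h : {set N} -> R) (A U : {set N}).

Definition pweight q A : R :=
  \rprod_(e : N) (if e \in A then q e else 1 - q e).

Definition mext h q : R := \rsum_(A : {set N}) (h A * pweight q A).

Definition upd q (e : N) (c : R) : N -> R := fun i => if i == e then c else q i.

Definition cube q : Prop := forall e, 0 <= q e <= 1.

Definition marg h (e : N) A : R := h (e |: A) - h A.

(* On the cube no truncation happens: F coincides with mext. *)
Lemma multilinear_cube h q : cube q -> multilinear h q = mext h q.
Proof.
move=> qc; apply: eq_bigr => A _; congr (_ * _); apply: eq_bigr => e _.
by rewrite Rmin_left //; case: (qc e).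
Qed.

Lemma mext_ext h q q' : (forall e, q e = q' e) -> mext h q = mext h q'.
Proof.
move=> qq'; apply: eq_bigr => A _; congr (_ * _); apply: eq_bigr => e _.
by rewrite qq'.
Qed.

Lemma multilinear_ext h x y :
  (forall e, x e = y e) -> multilinear h x = multilinear h y.
Proof. by move=> xy; apply: (mext_ext h) => e; rewrite xy. Qed.

Lemma cube_upd q e c : cube q -> 0 <= c <= 1 -> cube (upd q e c).
Proof. by move=> qc c01 i; rewrite /upd; case: (i == e). Qed.

Lemma upd_id q e : forall i, upd q e (q e) i = q i.
Proof. by move=> i; rewrite /upd; case: eqP => [->|]. Qed.

Lemma pweight_ge0 q A : cube q -> 0 <= pweight q A.
Proof.
move=> qc; apply: (big_ind (fun x => 0 <= x)); [lra | move=> *; nra |].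
by move=> e _; case: (e \in A); have := qc e; lra.
Qed.

Lemma pweight_split q e A : pweight q A = (if e \in A then q e else 1 - q e) *
  \big[Rmult/R1]_(i : N | i != e) (if i \in A then q i else 1 - q i).
Proof. by rewrite /pweight (bigD1 e). Qed.

Lemma pweight_upd_rest q e c A :
  \big[Rmult/R1]_(i : N | i != e) (if i \in A then upd q e c i else 1 - upd q e c i)
  = \big[Rmult/R1]_(i : N | i != e) (if i \in A then q i else 1 - q i).
Proof. by apply: eq_bigr => i /negbTE ie; rewrite /upd ie. Qed.

Lemma mext_upd h q e c :
  mext h (upd q e c) = c * mext h (upd q e 1) + (1 - c) * mext h (upd q e 0).
Proof.
rewrite /mext !big_distrr -big_split; apply: eq_bigr => A _ /=.
rewrite !(pweight_split _ e) !pweight_upd_rest /upd eqxx.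
by case: (e \in A); ring.
Qed.

Lemma mext_coord h q e :
  mext h q = q e * mext h (upd q e 1) + (1 - q e) * mext h (upd q e 0).
Proof. by rewrite -mext_upd; apply: mext_ext => i; rewrite upd_id. Qed.

(* Fixing e in, resp. out, of the random set: A |-> e |: A matches the
   weights of sets containing e under q[e:=1] with those under q[e:=0]. *)
Lemma sum_upd1_shift (k : {set N} -> R) q e :
  \rsum_(A : {set N}) (k A * pweight (upd q e 1) A) =
  \rsum_(A : {set N}) (k (e |: A) * pweight (upd q e 0) A).
Proof.
have w1_out A : e \notin A -> pweight (upd q e 1) A = 0.
  by move=> /negbTE eA; rewrite (pweight_split _ e) eA /upd eqxx; ring.
have w0_in A : e \in A -> pweight (upd q e 0) A = 0.
  by move=> eA; rewrite (pweight_split _ e) eA /upd eqxx; ring.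
have w_shift A : e \notin A ->
    pweight (upd q e 1) (e |: A) = pweight (upd q e 0) A.
  move=> /negbTE eA; rewrite !(pweight_split _ e) setU11 eA /upd eqxx.
  congr (_ * _); first ring.
  by apply: eq_bigr => i /negbTE ie; rewrite in_setU1 ie.
rewrite (bigID (fun A : {set N} => e \in A)) /= [X in _ + X]big1; last first.
  by move=> A eA; rewrite w1_out // Rmult_0_r.
rewrite [RHS](bigID (fun A : {set N} => e \in A)) /= [X in _ = X + _]big1;
  last by move=> A eA; rewrite w0_in // Rmult_0_r.
rewrite Rplus_0_r Rplus_0_l.
rewrite (reindex_onto (fun A : {set N} => e |: A) (fun A : {set N} => A :\ e));
  last by move=> A eA; rewrite setD1K.
transitivity (\big[Rplus/R0]_(A : {set N} | e \notin A)
                (k (e |: A) * pweight (upd q e 1) (e |: A))).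
  apply: eq_bigl => A; rewrite setU11 /=; case: (boolP (e \in A)) => eA /=.
    apply/negbTE/negP => /eqP AeA; move: eA; rewrite -AeA.
    by rewrite in_setD1 eqxx.
  by rewrite setU1K // eqxx.
by apply: eq_bigr => A eA; rewrite w_shift.
Qed.

Lemma mext_marg h q e :
  mext h (upd q e 1) - mext h (upd q e 0) = mext (marg h e) (upd q e 0).
Proof.
rewrite /mext sum_upd1_shift /marg /Rminus -rsum_opp -big_split.
by apply: eq_bigr => A _ /=; ring.
Qed.

Lemma mext_opp h q : mext (fun A => - h A) q = - mext h q.
Proof. by rewrite /mext -rsum_opp; apply: eq_bigr => A _; ring. Qed.

Lemma mext_indic h A : mext h (indic A) = h A.
Proof.
rewrite /mext (bigD1 A) //= big1.
  rewrite /pweight big1; first ring.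
  by move=> i _; rewrite /indic; case: (i \in A); ring.
move=> B BA.
case: (pickP (fun i => (i \in B) != (i \in A))) => [i iBA | BeqA].
  rewrite (pweight_split _ i) /indic; move: iBA.
  by case: (i \in B); case: (i \in A) => //= _; ring.
case/eqP: BA; apply/setP => i; by move: (BeqA i) => /negbFE/eqP.
Qed.

Lemma set_ind (P : {set N} -> Prop) :
  P set0 -> (forall e U, e \notin U -> P U -> P (e |: U)) -> forall U, P U.
Proof.
move=> P0 PS U; move Hn: #|U| => n; elim: n U Hn => [|n IH] U Hn.
  by move/eqP: Hn; rewrite cards_eq0 => /eqP ->.
case: (set_0Vmem U) => [U0 | [e eU]]; first by rewrite U0 cards0 in Hn.
rewrite -(setD1K eU); apply: PS; first by rewrite in_setD1 eqxx.
by apply: IH; move: Hn; rewrite (cardsD1 e) eU => -[].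
Qed.

Section Monotone.
Variable h : {set N} -> R.
Hypothesis h_grows : forall A e, h A <= h (e |: A).

(* Along one coordinate mext h is affine with nonnegative slope. *)
Lemma mext_upd_mono q e c c' : cube q -> 0 <= c <= c' ->
  mext h (upd q e c) <= mext h (upd q e c').
Proof.
move=> qc cc'; rewrite (mext_upd h q e c) (mext_upd h q e c').
have slope : 0 <= mext h (upd q e 1) - mext h (upd q e 0).
  rewrite mext_marg; apply: rsum_ge0 => A; apply: Rmult_le_pos.
    by have := h_grows A e; rewrite /marg; lra.
  by apply: pweight_ge0; apply: cube_upd => //; lra.
nra.
Qed.

(* The multilinear polynomial of a monotone set function is monotone on the
   cube; proved by raising one coordinate at a time. *)
Lemma mext_mono q q' : cube q -> cube q' -> (forall e, q e <= q' e) ->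
  mext h q <= mext h q'.
Proof.
move=> qc qc' qq'.
suff: forall U q q', cube q -> cube q' -> (forall e, q e <= q' e) ->
    (forall e, e \notin U -> q e = q' e) -> mext h q <= mext h q'.
  by move/(_ [set: N] q q' qc qc' qq'); apply=> e; rewrite in_setT.
elim/set_ind => [|e U _ IH] r r' rc rc' rr' out.
  rewrite (@mext_ext h r r'); first lra.
  by move=> i; apply: out; rewrite in_set0.
have mid_c : cube (upd r' e (r e)) by apply: cube_upd.
apply: (Rle_trans _ (mext h (upd r' e (r e)))).
  apply: IH => // i; rewrite /upd; case: eqP => [->|ie] //; first lra.
  by move=> iU; apply: out; rewrite in_setU1 (negbTE iU) orbF; apply/eqP.
rewrite -[X in _ <= X](mext_ext h (upd_id r' e)).
by apply: mext_upd_mono => //; split; [case: (rc e) | apply: rr'].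
Qed.

End Monotone.
End MultilinearPolynomial.

Section Concavity.
Variable N : finType.
Variable f : {set N} -> R.
Hypothesis f_mono : monotone f.
Hypothesis f_sub : submodular f.
Implicit Types (q : N -> R) (A B U T : {set N}).

Lemma monotone_grows A e : f A <= f (e |: A).
Proof. by apply: f_mono; apply: subsetUr. Qed.

Lemma marg_antitone e A B : A \subset B -> marg f e B <= marg f e A.
Proof.
move=> AB; rewrite /marg.
have := f_sub (e |: A) B.
have -> : e |: A :|: B = e |: B by rewrite -setUA (setUidPr AB).
have : f A <= f ((e |: A) :&: B) by apply: f_mono; rewrite subsetI subsetUr AB.
lra.
Qed.

Lemma mext_marg_antitone e q q' : cube q -> cube q' -> (forall i, q i <= q' i) ->
  mext (marg f e) q' <= mext (marg f e) q.
Proof.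
move=> qc qc' qq'.
suff: mext (fun A => - marg f e A) q <= mext (fun A => - marg f e A) q'
  by rewrite !mext_opp; lra.
apply: mext_mono => // A x.
by have := marg_antitone e (subsetUr [set x] A); lra.
Qed.

Definition toward q U (eps : R) : N -> R :=
  fun i => if i \in U then q i + eps * (1 - q i) else q i.

Definition raise q U : N -> R := fun i => if i \in U then 1 else q i.

Lemma toward_setU1 q e U eps i :
  toward q (e |: U) eps i = upd (toward q U eps) e (q e + eps * (1 - q e)) i.
Proof. by rewrite /toward /upd in_setU1; case: eqP => [->|]. Qed.

Lemma raise_setU1 q e U i : raise q (e |: U) i = upd (raise q U) e 1 i.
Proof. by rewrite /raise /upd in_setU1; case: eqP => [->|]. Qed.

Lemma upd_toward q e U eps c i : e \notin U ->
  upd (toward q U eps) e c i = toward (upd q e c) U eps i.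
Proof. by move=> eU; rewrite /toward /upd; case: eqP => [->|]; rewrite ?(negbTE eU). Qed.

Lemma upd_raise q e U c i : e \notin U -> upd (raise q U) e c i = raise (upd q e c) U i.
Proof. by move=> eU; rewrite /raise /upd; case: eqP => [->|]; rewrite ?(negbTE eU). Qed.

(* The one-coordinate step of the concavity argument, as pure algebra:
   with g_b, t_b, p_b the values at the start, raised and moved points after
   fixing coordinate e to b, a nonpositive mixed difference t1 - t0 - g1 + g0
   propagates the inequality from the two faces to the interior. *)
Lemma concave_combine (eps qe g0 g1 t0 t1 p0 p1 : R) :
  0 <= eps <= 1 -> 0 <= qe <= 1 ->
  (1 - eps) * g0 + eps * t0 <= p0 -> (1 - eps) * g1 + eps * t1 <= p1 ->
  t1 - t0 <= g1 - g0 ->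
  (1 - eps) * (qe * g1 + (1 - qe) * g0) + eps * t1 <=
  (qe + eps * (1 - qe)) * p1 + (1 - (qe + eps * (1 - qe))) * p0.
Proof.
move=> eps01 qe01 face0 face1 mixed.
have c1 : 0 <= (qe + eps * (1 - qe)) * (p1 - ((1 - eps) * g1 + eps * t1)).
  by apply: Rmult_le_pos; nra.
have c0 : 0 <= (1 - (qe + eps * (1 - qe))) * (p0 - ((1 - eps) * g0 + eps * t0)).
  by apply: Rmult_le_pos; nra.
have cm : 0 <= eps * (1 - eps) * (1 - qe) * (g1 - g0 - t1 + t0).
  by repeat apply: Rmult_le_pos; lra.
nra.
Qed.

Lemma mext_concave eps : 0 <= eps <= 1 -> forall U q, cube q ->
  (1 - eps) * mext f q + eps * mext f (raise q U) <= mext f (toward q U eps).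
Proof.
move=> eps01; elim/set_ind => [|e U eU IH] q qc.
  rewrite (@mext_ext _ f (raise q set0) q) => [|i]; last by rewrite /raise in_set0.
  rewrite (@mext_ext _ f (toward q set0 eps) q) => [|i]; last by rewrite /toward in_set0.
  lra.
have qc1 : cube (upd q e 1) by apply: cube_upd => //; lra.
have qc0 : cube (upd q e 0) by apply: cube_upd => //; lra.
have mixed : mext f (raise (upd q e 1) U) - mext f (raise (upd q e 0) U) <=
             mext f (upd q e 1) - mext f (upd q e 0).
  rewrite mext_marg -(mext_ext f (fun i => upd_raise q 1 i eU)).
  rewrite -(mext_ext f (fun i => upd_raise q 0 i eU)) mext_marg.
  apply: mext_marg_antitone => //.
  - apply: cube_upd; last lra.
    by move=> i; rewrite /raise; case: (i \in U) => //; lra.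
  - move=> i; rewrite /upd /raise; case: (i == e); first lra.
    by case: (i \in U); have := qc i; lra.
rewrite (mext_ext f (toward_setU1 q e U eps)) mext_upd.
rewrite (mext_ext f (fun i => upd_toward q eps 1 i eU)).
rewrite (mext_ext f (fun i => upd_toward q eps 0 i eU)).
rewrite (mext_ext f (raise_setU1 q e U)) (mext_ext f (fun i => upd_raise q 1 i eU)).
rewrite (mext_coord f q e).
by apply: (concave_combine (t0 := mext f (raise (upd q e 0) U))) => //; apply: IH.
Qed.

Lemma multilinear_step y eps T : cube y -> 0 <= eps <= 1 ->
  (1 - eps) * multilinear f y + eps * f T <=
  multilinear f (fun e => y e + eps * indic T e).
Proof.
move=> yc eps01.
have grows := monotone_grows.
have truncE : multilinear f (fun e => y e + eps * indic T e) =
              mext f (fun e => Rmin (y e + eps * indic T e) 1) by [].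
have raise_c : cube (raise y T).
  by move=> e; rewrite /raise; case: (e \in T) => //; lra.
have toward_c : cube (toward y T eps).
  move=> e; rewrite /toward; have := yc e; case: (e \in T) => // ye; nra.
have below_raise : f T <= mext f (raise y T).
  rewrite -[f T](mext_indic f T); apply: mext_mono => // e.
  - by rewrite /indic; case: (e \in T); lra.
  - by rewrite /indic /raise; case: (e \in T); have := yc e; lra.
have below_trunc : mext f (toward y T eps) <=
                   mext f (fun e => Rmin (y e + eps * indic T e) 1).
  apply: mext_mono => // [e | e].
  - split; last exact: Rmin_r.
    by apply: Rmin_glb; [have := yc e; rewrite /indic; case: (e \in T); nra | lra].
  - rewrite /toward /indic; have := yc e; case: (e \in T) => ye.
      by apply: Rmin_glb; nra.
    by rewrite Rmult_0_r Rplus_0_r Rmin_left; lra.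
have := mext_concave eps01 T yc.
rewrite multilinear_cube // truncE; nra.
Qed.

End Concavity.

Section Process.
Variables (N : finType) (l : nat).
Implicit Types (s : {ffun 'I_l -> {set N}}) (X Y : {ffun 'I_l -> {set N}} -> R).

Lemma xs_0 s e : xs s 0 e = 0.
Proof. by rewrite /xs big_pred0. Qed.

Lemma xs_succ s (j : 'I_l) e : xs s j.+1 e = xs s j e + / INR l * indic (s j) e.
Proof.
rewrite /xs (bigD1 j) //= Rplus_comm; congr (_ + _).
apply: eq_bigl => k; rewrite ltnS leq_eqVlt.
by rewrite -val_eqE /=; case: ltngtP.
Qed.

(* Every x_i lies in the cube: it averages at most l indicator vectors. *)
Lemma xs_cube s i : (0 < l)%N -> cube (xs s i).
Proof.
move=> l_gt0 e; have l_pos : 0 < INR l by apply: lt_0_INR; apply/ltP.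
have inv_pos : 0 <= / INR l by apply: Rlt_le; apply: Rinv_0_lt_compat.
rewrite /xs big_mkcond; split.
  apply: rsum_ge0 => j; case: (j < i)%N; last lra.
  by apply: Rmult_le_pos => //; rewrite /indic; case: (e \in s j); lra.
apply: (Rle_trans _ (\rsum_(j < l) / INR l)).
  apply: rsum_le => j; case: (j < i)%N; last lra.
  by rewrite /indic; case: (e \in s j); lra.
by rewrite rsum_const Rinv_r; lra.
Qed.

Lemma xs_convex (I : {set {set N}}) s : (0 < l)%N -> (forall j, s j \in I) ->
  exists (B : 'I_l -> {set N}) (lam : 'I_l -> R),
    (forall j, B j \in I) /\ (forall j, 0 <= lam j) /\
    \rsum_(j < l) lam j = 1 /\
    (forall e, xs s l e = \rsum_(j < l) (lam j * indic (B j) e)).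
Proof.
move=> l_gt0 s_in; have l_pos : 0 < INR l by apply: lt_0_INR; apply/ltP.
exists (fun j => s j), (fun _ => / INR l); split=> //; split.
  by move=> _; apply: Rlt_le; apply: Rinv_0_lt_compat.
split; first by rewrite rsum_const Rinv_r; lra.
by move=> e; rewrite /xs; apply: eq_bigl => j; rewrite ltn_ord.
Qed.

Variable p : {ffun 'I_l -> {set N}} -> R.
Hypothesis p_ge0 : forall s, 0 <= p s.

Lemma expect_le X Y : (forall s, X s <= Y s) -> expect p X <= expect p Y.
Proof. by move=> XY; apply: rsum_le => s; apply: Rmult_le_compat_l. Qed.

Lemma expect_affine c1 c2 c3 X Y : expect p (fun _ => 1) = 1 ->
  expect p (fun s => c1 * X s + c2 * Y s + c3) =
  c1 * expect p X + c2 * expect p Y + c3.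
Proof.
move=> p_sum1; rewrite -[c3 in RHS]Rmult_1_r -p_sum1 /expect !big_distrr.
by rewrite -!big_split; apply: eq_bigr => s _ /=; ring.
Qed.

(* Law of total expectation: E[X] is the sum over all histories h of the
   first j sets of the contributions of the outcomes extending h. *)
Lemma expect_ge0_by_history (j : nat) X :
  (forall h : {ffun 'I_l -> {set N}}, 0 <= expect p (fun s =>
     if [forall k : 'I_l, (k < j)%N ==> (s k == h k)] then X s else 0)) ->
  0 <= expect p X.
Proof.
move=> hist_ge0.
pose trailing_empty (h : {ffun 'I_l -> {set N}}) := [forall k : 'I_l, (j <= k)%N ==> (h k == set0)].
pose prefix s : {ffun 'I_l -> {set N}} :=
  [ffun k : 'I_l => if (k < j)%N then s k else set0].
have split_hist : expect p X = \big[Rplus/R0]_(h | trailing_empty h) expect p (fun s =>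
    if [forall k : 'I_l, (k < j)%N ==> (s k == h k)] then X s else 0).
  rewrite /expect exchange_big /=; apply: eq_bigr => s _.
  rewrite (bigD1 (prefix s)) /=; last first.
    by apply/forallP => k; apply/implyP => jk; rewrite ffunE ltnNge jk.
  rewrite big1 ?Rplus_0_r.
    suff -> : [forall k : 'I_l, (k < j)%N ==> (s k == prefix s k)] by [].
    by apply/forallP => k; apply/implyP => kj; rewrite ffunE kj.
  move=> h /andP [h_empty h_ne]; case: ifP => s_ext; last by ring.
  case/eqP: h_ne; apply/ffunP => k; rewrite ffunE; case: ifP => kj.
    by move/forallP: s_ext => /(_ k) /implyP /(_ kj) /eqP.
  by move/forallP: h_empty => /(_ k) /implyP; rewrite leqNgt kj => /(_ isT) /eqP.
rewrite split_hist; apply: (big_ind (fun x => 0 <= x)); [lra | move=> *; lra |].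
by move=> h _; apply: hist_ge0.
Qed.

Variables (f : {set N} -> R) (T : {set N}) (alpha : R).

Definition oracle_gain (j : 'I_l) s : R :=
  let F := multilinear f in
  let x := xs s j in
  let g1 := F (fun e => x e + / INR l * indic (s j) e) - F x in
  let g2 := F (fun e => x e + / INR l * (indic (s j) e + indic T e)) - F x in
  g1 - alpha * (g2 - g1).

Definition greedy_value (i : nat) : R := expect p (fun s => multilinear f (xs s i)).

Lemma greedy_value_0 : normalized f -> greedy_value 0 = 0.
Proof.
move=> f0; rewrite /greedy_value /expect big1 // => s _.
rewrite (@multilinear_ext _ f _ (indic set0)) => [|e]; last first.
  by rewrite xs_0 /indic in_set0.
by rewrite multilinear_cube ?mext_indic ?f0 => [|e]; [ring | rewrite /indic in_set0; lra].
Qed.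

Lemma gain_recurrence (j : 'I_l) :
  (0 < l)%N -> expect p (fun _ => 1) = 1 ->
  monotone f -> submodular f -> 0 <= alpha ->
  0 <= expect p (oracle_gain j) ->
  alpha / INR l * (f T - greedy_value j.+1) <= greedy_value j.+1 - greedy_value j.
Proof.
move=> l_gt0 p_sum1 f_mono f_sub alpha_ge0 gain_ge0.
have l_ge1 : 1 <= INR l by change 1 with (INR 1); apply: le_INR; apply/leP.
set eps := / INR l.
have eps01 : 0 <= eps <= 1.
  split; first by apply: Rlt_le; apply: Rinv_0_lt_compat; lra.
  by rewrite /eps -Rinv_1; apply: Rinv_le_contravar; lra.
have pointwise s : oracle_gain j s <=
    (1 + alpha * eps) * multilinear f (xs s j.+1) + -1 * multilinear f (xs s j)
    + - (alpha * eps * f T).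
  rewrite /oracle_gain -/eps.
  rewrite (multilinear_ext f (x := fun e => xs s j e + eps * indic (s j) e)
                             (y := xs s j.+1)); last by move=> e; rewrite xs_succ.
  rewrite (multilinear_ext f
             (x := fun e => xs s j e + eps * (indic (s j) e + indic T e))
             (y := fun e => xs s j.+1 e + eps * indic T e)); last first.
    by move=> e; rewrite xs_succ /eps; ring.
  have := multilinear_step f_mono f_sub T (xs_cube s j.+1 l_gt0) eps01.
  have := alpha_ge0; nra.
have := expect_le pointwise; rewrite expect_affine // /greedy_value /Rdiv.
rewrite -/eps; lra.
Qed.

End Process.

Lemma recurrence_bound (a : nat -> R) (c M : R) (n : nat) :
  0 <= c -> a 0%N = 0 ->
  (forall k, (k < n)%N -> c * (M - a k.+1) <= a k.+1 - a k) ->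
  M - a n <= M / (1 + c) ^ n.
Proof.
move=> c_ge0 a0; elim: n => [|n IH] step.
  by rewrite a0 /= /Rdiv Rinv_1; lra.
have prev := IH (fun k kn => step k (ltnW kn)).
have cur := step n (ltnSn n).
have pow_pos : 0 < (1 + c) ^ n by apply: pow_lt; lra.
apply: (Rmult_le_reg_l (1 + c)); first lra.
have -> : (1 + c) * (M / (1 + c) ^ n.+1) = M / (1 + c) ^ n.
  by rewrite /= /Rdiv; field; lra.
lra.
Qed.

Lemma exp_pow x n : exp x ^ n = exp (x * INR n).
Proof.
elim: n => [|n IH]; first by rewrite /= Rmult_0_r exp_0.
change (exp x ^ n.+1) with (exp x * exp x ^ n).
by rewrite IH S_INR -exp_plus; f_equal; ring.
Qed.

Lemma bernoulli_ineq c n : 0 <= c <= 1 -> 1 - INR n * c <= (1 - c) ^ n.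
Proof.
move=> c01; elim: n => [|n IH]; first by rewrite /=; lra.
change ((1 - c) ^ n.+1) with ((1 - c) * (1 - c) ^ n); rewrite S_INR.
have : 0 <= (1 - c) ^ n by apply: pow_le; lra.
have : 0 <= INR n * c * c by have := pos_INR n; nra.
nra.
Qed.

(* From e^(-t) >= 1 - t: (1 + t)^(-1) <= e^(-t) / (1 - t^2) for 0 <= t < 1. *)
Lemma inv_succ_le t : 0 <= t < 1 -> / (1 + t) <= exp (- t) / (1 - t * t).
Proof.
move=> t01; have exp_ge := exp_ineq1_le (- t).
have sq_pos : 0 < 1 - t * t by nra.
apply: (Rmult_le_reg_l ((1 + t) * (1 - t * t))); first nra.
have -> : (1 + t) * (1 - t * t) * / (1 + t) = 1 - t * t by field; lra.
have -> : (1 + t) * (1 - t * t) * (exp (- t) / (1 - t * t)) = (1 + t) * exp (- t).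
  by field; lra.
nra.
Qed.

(* Hence (1 + t)^(-n) <= e^(-n t) / (1 - n t^2), using Bernoulli. *)
Lemma inv_pow_succ_le t n : 0 <= t < 1 -> INR n * (t * t) < 1 ->
  / (1 + t) ^ n <= exp (- (t * INR n)) / (1 - INR n * (t * t)).
Proof.
move=> t01 nt2.
have sq01 : 0 <= t * t <= 1 by nra.
have bern := bernoulli_ineq n sq01.
apply: (Rle_trans _ ((exp (- t) / (1 - t * t)) ^ n)).
  rewrite -pow_inv; apply: pow_incr; split; last exact: inv_succ_le.
  by apply: Rlt_le; apply: Rinv_0_lt_compat; lra.
rewrite /Rdiv Rpow_mult_distr exp_pow pow_inv Ropp_mult_distr_l.
apply: Rmult_le_compat_l; first exact: Rlt_le (exp_pos _).
by apply: Rinv_le_contravar; lra.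
Qed.

(* From e^a >= 1 + a. *)
Lemma exp_neg_bound a : a * exp (- a) <= 1 - exp (- a).
Proof.
have exp_ge := exp_ineq1_le a.
have inv : exp (- a) * exp a = 1 by rewrite -exp_plus Rplus_opp_l exp_0.
have := Rmult_le_compat_l _ _ _ (Rlt_le _ _ (exp_pos (- a))) exp_ge.
lra.
Qed.

Lemma discretisation_loss a l : 0 < a <= 1 -> (0 < l)%N ->
  (1 - 2 / INR l) * (1 - exp (- a)) <= 1 - / (1 + a / INR l) ^ l.
Proof.
move=> a01 l_gt0; have l_pos : 0 < INR l by apply: lt_0_INR; apply/ltP.
have E1 : exp (- a) <= 1 by rewrite -exp_0; apply: Rlt_le; apply: exp_increasing; lra.
have E0 := exp_pos (- a).
set t := a / INR l.
have t_pos : 0 < t by apply: Rdiv_lt_0_compat; lra.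
have pow_ge1 : 1 <= (1 + t) ^ l by apply: pow_R1_Rle; lra.
have inv_le1 : / (1 + t) ^ l <= 1.
  by rewrite -[X in _ <= X]Rinv_1; apply: Rinv_le_contravar; lra.
case: (leqP l 2) => [l_le2 | l_gt2].
  have l_le2' : INR l <= 2 by change 2 with (INR 2); apply: le_INR; apply/leP.
  have : 1 <= 2 / INR l.
    by apply: (Rmult_le_reg_l (INR l)) => //; field_simplify; lra.
  nra.
have l_ge3 : 3 <= INR l.
  have : INR 3 <= INR l by apply: le_INR; apply/leP.
  by rewrite (_ : INR 3 = 3) // /=; ring.
set c := INR l * (t * t).
have c_val : c = a * a / INR l by rewrite /c /t; field; lra.
have c13 : c <= 1 / 3.
  by rewrite c_val; apply: (Rmult_le_reg_l (INR l)) => //; field_simplify; nra.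
have t01 : 0 <= t < 1.
  split; first lra.
  by apply: (Rmult_lt_reg_l (INR l)) => //; rewrite /t; field_simplify; lra.
have c_lt1 : c < 1 by lra.
have := inv_pow_succ_le t01 c_lt1.
rewrite -/c (_ : t * INR l = a); last by rewrite /t; field; lra.
set E := exp (- a) in E1 E0 *.
move=> pow_bound.
suff : (1 - 2 / INR l) * (1 - E) <= 1 - E / (1 - c) by lra.
have aE := exp_neg_bound a; rewrite -/E in aE.
apply: (Rmult_le_reg_l (1 - c)); first lra.
have -> : (1 - c) * (1 - E / (1 - c)) = 1 - c - E by field; lra.
have gap : 1 - c - E - (1 - c) * ((1 - 2 / INR l) * (1 - E))
         = / INR l * (2 * (1 - E) * (1 - c) - a * a * E).
  by rewrite c_val; field; lra.
have : 0 <= 2 * (1 - E) * (1 - c) - a * a * E.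
  have : 0 <= a * E * (1 - a) by apply: Rmult_le_pos; [apply: Rmult_le_pos|]; lra.
  have : 0 <= (1 - E) * (1 / 3 - c) by apply: Rmult_le_pos; lra.
  lra.
have : 0 < / INR l by apply: Rinv_0_lt_compat.
nra.
Qed.

Lemma accuracy_loss (eps : R) (l : nat) : 0 < eps -> INR l >= 2 / eps ->
  1 - eps <= 1 - 2 / INR l.
Proof.
move=> eps_pos l_ge.
have l_pos : 0 < INR l by have := Rdiv_lt_0_compat 2 eps ltac:(lra) eps_pos; lra.
suff : 2 / INR l <= eps by lra.
apply: (Rmult_le_reg_l (INR l)) => //.
have -> : INR l * (2 / INR l) = 2 by field; lra.
have : 2 / eps * eps = 2 by field; lra.
have := Rmult_le_compat_r eps _ _ (Rlt_le _ _ eps_pos) (Rge_le _ _ l_ge).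
lra.
Qed.

Theorem mainTheorem12
  (N : finType) (I : {set {set N}}) (f : {set N} -> R)
  (alpha : R) (l : nat) (T : {set N})
  (p : {ffun 'I_l -> {set N}} -> R) :
  nonneg_setfun f -> normalized f -> monotone f -> submodular f ->
  0 < alpha <= 1 -> (0 < l)%N -> T \in I ->
  (forall s, 0 <= p s) -> expect p (fun _ => 1) = 1 ->
  (forall s, 0 < p s -> forall j, s j \in I) ->
  (forall (j : 'I_l) (h : {ffun 'I_l -> {set N}}),
     expect p (fun s =>
       if [forall k : 'I_l, (k < j)%N ==> (s k == h k)] then
         let F := multilinear f in
         let x := xs s j in
         let g1 := F (fun e => x e + / INR l * indic (s j) e) - F x in
         let g2 := F (fun e => x e + / INR l * (indic (s j) e + indic T e)) - F x in
         g1 - alpha * (g2 - g1)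
       else 0) >= 0) ->
  (forall s, 0 < p s ->
     exists (B : 'I_l -> {set N}) (lam : 'I_l -> R),
       (forall j, B j \in I) /\ (forall j, 0 <= lam j) /\
       \rsum_(j < l) lam j = 1 /\
       (forall e, xs s l e = \rsum_(j < l) (lam j * indic (B j) e))) /\
  expect p (fun s => multilinear f (xs s l))
    >= (1 - / (1 + alpha / INR l) ^ l) * f T /\
  (1 - / (1 + alpha / INR l) ^ l) * f T
    >= (1 - 2 / INR l) * (1 - exp (- alpha)) * f T /\
  (forall eps, 0 < eps -> INR l >= 2 / eps ->
     expect p (fun s => multilinear f (xs s l))
       >= (1 - eps) * (1 - exp (- alpha)) * f T).
Proof.
move=> f_ge0 f0 f_mono f_sub alpha01 l_gt0 _ p_ge0 p_sum1 S_in oracle.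
have l_pos : 0 < INR l by apply: lt_0_INR; apply/ltP.
have c_ge0 : 0 <= alpha / INR l by apply: Rlt_le; apply: Rdiv_lt_0_compat; lra.
have rounds k : (k < l)%N -> alpha / INR l * (f T - greedy_value p f k.+1)
                              <= greedy_value p f k.+1 - greedy_value p f k.
  move=> kl; apply: (gain_recurrence p_ge0 (j := Ordinal kl)) => //; first lra.
  apply: (expect_ge0_by_history (j := k)) => h.
  exact: Rge_le (oracle (Ordinal kl) h).
have greedy := recurrence_bound c_ge0 (greedy_value_0 p f0) rounds.
have loss := discretisation_loss alpha01 l_gt0.
have fT_ge0 := f_ge0 T.
have loss_fT := Rmult_le_compat_r _ _ _ fT_ge0 loss.
have gap_ge0 : 0 <= (1 - exp (- alpha)) * f T.
  apply: Rmult_le_pos => //.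
  by have := exp_increasing (- alpha) 0; rewrite exp_0; lra.
rewrite /greedy_value /Rdiv in greedy loss_fT *.
split; first by move=> s /S_in; exact: xs_convex.
split; first lra.
split; first lra.
move=> eps eps_pos l_ge.
have := Rmult_le_compat_r _ _ _ gap_ge0 (accuracy_loss eps_pos l_ge).
rewrite /Rdiv; lra.
Qed.
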